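(* Let $X$ be a finite $T_0$ topological space, $\mathcal V$ a multivector field on $X$ with $X$ invariant, and $\mathcal M=\{M_p\mid p\in\mathbb P\}$ a Morse predecomposition of $X$. Then for every nonempty isolated invariant set $S\subset X$ we have $S\cap\bigcup_{p\in\mathbb P}M_p\ne\emptyset$. In particular, every critical multivector $V\in\mathcal V$ satisfies $V\subset\bigcup_{p\in\mathbb P}M_p$.
   Context: Notation: $\operatorname{cl}$ is closure; $A\subset X$ is locally closed if $\operatorname{cl}A\setminus A$ is closed. A multivector field $\mathcal V$ on $X$ is a partition of $X$ into locally closed sets (multivectors); $[x]_{\mathcal V}$ is the multivector containing $x$. A multivector $V$ is critical if the relative singular homology $H(\operatorname{cl}V,\operatorname{cl}V\setminus V)$ is nontrivial, regular otherwise. $A$ is $\mathcal V$-compatible if it is a union of multivectors; $\langle A\rangle_{\mathcal V}$ is the smallest locally closed $\mathcal V$-compatible set containing $A$. $\Pi_{\mathcal V}(x)=\operatorname{cl}\{x\}\cup[x]_{\mathcal V}$. A solution is a partial map $\gamma:\mathbb Z\nrightarrow X$ with domain an integer interval and $\gamma(t+1)\in\Pi_{\mathcal V}(\gamma(t))$; a path has finite domain; a full solution has domain $\mathbb Z$. $\alpha(\gamma)=\langle\bigcap_{t\le0}\gamma((-\infty,t])\rangle_{\mathcal V}$, $\omega(\gamma)=\langle\bigcap_{t\ge0}\gamma([t,\infty))\rangle_{\mathcal V}$. A full solution is essential unless $\alpha(\gamma)$ or $\omega(\gamma)$ lies in a single regular multivector; an essential solution in $A$ is one with image in $A$. $\operatorname{Inv}S$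 is the set of $x\in S$ with an essential solution $\gamma$ in $S$, $\gamma(0)=x$; $S$ is invariant if $\operatorname{Inv}S=S$. An invariant $S$ is isolated invariant if there is a closed $N\supset\Pi_{\mathcal V}(S)$ such that every path in $N$ with endpoints in $S$ has image in $S$. A link from $S_1$ to $S_2$ is a full solution with $\alpha(\gamma)\cap S_1\ne\emptyset\ne\omega(\gamma)\cap S_2$. A Morse predecomposition of $X$ is an indexed family $\{M_p\mid p\in\mathbb P\}$ of mutually disjoint isolated invariant subsets of $X$ such that every essential solution in $X$ is a link from some $M_p$ to some $M_q$. *)

From Stdlib Require Import Reals ZArith ClassicalEpsilon.
From mathcomp Require Import all_boot.

Set Implicit Arguments.
Unset Strict Implicit.
Unset Printing Implicit Defensive.

Definition pb (P : Prop) : bool :=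
  if excluded_middle_informative P then true else false.

Section FiniteSpace.
Variable X : finType.
Variable op : {set {set X}}.

Definition is_topology : Prop :=
  [/\ set0 \in op, [set: X] \in op,
      (forall U V, U \in op -> V \in op -> U :|: V \in op) &
      (forall U V, U \in op -> V \in op -> U :&: V \in op)].

Definition T0 : Prop :=
  forall x y : X, x <> y ->
    exists2 U, U \in op & (x \in U) != (y \in U).

Definition closedb (C : {set X}) : bool := ~: C \in op.

Definition cl (A : {set X}) : {set X} :=
  \bigcap_(C | closedb C && (A \subset C)) C.

Definition locally_closed (A : {set X}) : bool := closedb (cl A :\: A).

Definition pt (n : nat) := 'I_n.+1 -> R.

Definition in_simplex (n : nat) (p : pt n) : Prop :=
  (forall i, Rle R0 (p i)) /\ \big[Rplus/R0]_(i < n.+1) p i = R1.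

(* a (candidate) singular n-simplex; only its restriction to Δ^n matters *)
Definition Sim (n : nat) := pt n -> X.

(* continuity of σ : Δ^n -> X (Δ^n with the subspace topology of R^{n+1},
   which is induced by the sup-metric) *)
Definition continuous_on_simplex (n : nat) (s : Sim n) : Prop :=
  forall U, U \in op -> forall p, in_simplex p -> s p \in U ->
    exists2 eps : R, Rlt R0 eps &
      forall q, in_simplex q -> (forall i, Rlt (Rabs (Rminus (q i) (p i))) eps) ->
        s q \in U.

Definition singular_in (A : {set X}) (n : nat) (s : Sim n) : Prop :=
  continuous_on_simplex s /\ forall p, in_simplex p -> s p \in A.

Definition agree (n : nat) (s t : Sim n) : Prop :=
  forall p, in_simplex p -> s p = t p.

Definition chain (n : nat) := seq (Z * Sim n).

Definition coef (n : nat) (c : chain n) (s : Sim n) : Z :=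
  \big[Z.add/0%Z]_(e <- c)
     (if excluded_middle_informative (agree e.2 s) then e.1 else 0%Z).

Definition chain_eq (n : nat) (c d : chain n) : Prop :=
  forall s, coef c s = coef d s.

Definition chain_in (A : {set X}) (n : nat) (c : chain n) : Prop :=
  forall e, List.In e c -> singular_in A e.2.

(* i-th face map Δ^n -> Δ^{n+1} (insert a 0 coordinate at position i) *)
Definition face (n : nat) (i : 'I_n.+2) (p : pt n) : pt n.+1 :=
  fun j => match unlift i j with Some k => p k | None => R0 end.

Definition bd (n : nat) (c : chain n.+1) : chain n :=
  flatten [seq [seq ((if odd i then Z.opp e.1 else e.1),
                     (fun p => e.2 (face i p))) | i : 'I_n.+2 <- enum 'I_n.+2]
          | e <- c].

Definition rel_cycle (A B : {set X}) (n : nat) : chain n -> Prop :=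
  match n return chain n -> Prop with
  | 0 => fun c => chain_in A c
  | m.+1 => fun c => chain_in A c /\
              exists2 e : chain m, chain_in B e & chain_eq (bd c) e
  end.

Definition rel_boundary (A B : {set X}) (n : nat) (c : chain n) : Prop :=
  exists (d : chain n.+1) (e : chain n),
    [/\ chain_in A d, chain_in B e & chain_eq c (bd d ++ e)].

Definition rel_homology_nontrivial (A B : {set X}) : Prop :=
  exists n (c : chain n), rel_cycle A B c /\ ~ rel_boundary A B c.

Variable mv : {set {set X}}.

Definition multivector_field : Prop :=
  partition mv [set: X] /\ forall V, V \in mv -> locally_closed V.

Definition critical (V : {set X}) : Prop :=
  rel_homology_nontrivial (cl V) (cl V :\: V).
Definition regular (V : {set X}) : Prop := ~ critical V.

Definition mvec (x : X) : {set X} := pblock mv x.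

Definition compatible (A : {set X}) : bool :=
  [forall x in A, mvec x \subset A].

Definition lc_hull (A : {set X}) : {set X} :=
  \bigcap_(B | [&& locally_closed B, compatible B & A \subset B]) B.

Definition Pi (x : X) : {set X} := cl [set x] :|: mvec x.
Definition PiS (S : {set X}) : {set X} := \bigcup_(x in S) Pi x.

Definition full_solution (g : Z -> X) : Prop :=
  forall t, g (Z.succ t) \in Pi (g t).

Definition alpha (g : Z -> X) : {set X} :=
  lc_hull [set x | pb (forall t, Z.le t 0 -> exists s, Z.le s t /\ g s = x)].
Definition omega (g : Z -> X) : {set X} :=
  lc_hull [set x | pb (forall t, Z.le 0 t -> exists s, Z.le t s /\ g s = x)].

Definition in_single_regular (A : {set X}) : Prop :=
  exists2 V, V \in mv & regular V /\ A \subset V.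

Definition essential (g : Z -> X) : Prop :=
  full_solution g /\
  ~ (in_single_regular (alpha g) \/ in_single_regular (omega g)).

Definition essential_in (S : {set X}) (g : Z -> X) : Prop :=
  essential g /\ forall t, g t \in S.

Definition Inv (S : {set X}) : {set X} :=
  [set x in S | pb (exists g, essential_in S g /\ g Z0 = x)].

Definition invariant_set (S : {set X}) : Prop := Inv S = S.

Definition sol_path (x0 : X) (s : seq X) : bool :=
  path (fun x y => y \in Pi x) x0 s.

Definition isolated_invariant (S : {set X}) : Prop :=
  invariant_set S /\
  exists N : {set X}, [/\ closedb N, PiS S \subset N &
    forall x0 s, sol_path x0 s -> all (fun y => y \in N) (x0 :: s) ->
      x0 \in S -> last x0 s \in S -> all (fun y => y \in S) (x0 :: s)].

Definition link (S1 S2 : {set X}) (g : Z -> X) : Prop :=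
  full_solution g /\ alpha g :&: S1 != set0 /\ omega g :&: S2 != set0.

Definition morse_predecomposition (P : Type) (M : P -> {set X}) : Prop :=
  [/\ (forall p q, p <> q -> [disjoint M p & M q]),
      (forall p, isolated_invariant (M p)) &
      (forall g, essential_in [set: X] g ->
         exists p q, link (M p) (M q) g)].

End FiniteSpace.

(* Isolated invariant sets are locally closed and V-compatible, so they
   contain the α-limit set of every essential solution running inside them.
   A nonempty isolated invariant set S carries such a solution; it is a link
   between Morse sets, so its α-limit set, hence S, meets some M_p.
   For a critical multivector V and x ∈ V, the constant solution at x is
   essential, since both limit sets are <{x}> ⊆ V and V is the only multivector
   containing x.  Its α-limit set meets some M_p inside V, and M_p, being
   V-compatible, then contains all of V. *)

From Stdlib Require Import Reals ZArith ClassicalEpsilon.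
From mathcomp Require Import all_boot.

Set Implicit Arguments.
Unset Strict Implicit.
Unset Printing Implicit Defensive.

Lemma pbP (Q : Prop) : reflect Q (pb Q).
Proof. by rewrite /pb; case: excluded_middle_informative => h; constructor. Qed.

Section Closure.
Variables (X : finType) (op : {set {set X}}).
Hypothesis top : is_topology op.

Lemma closed0 : closedb op set0.
Proof. by case: top => _ hT _ _; rewrite /closedb setC0. Qed.

Lemma closedT : closedb op [set: X].
Proof. by case: top => h0 _ _ _; rewrite /closedb setCT. Qed.

Lemma closedU (A B : {set X}) :
  closedb op A -> closedb op B -> closedb op (A :|: B).
Proof. by case: top => _ _ _ hI; rewrite /closedb setCU; apply: hI. Qed.

Lemma closedI (A B : {set X}) :
  closedb op A -> closedb op B -> closedb op (A :&: B).
Proof. by case: top => _ _ hU _; rewrite /closedb setCI; apply: hU. Qed.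

Lemma cl_closed (A : {set X}) : closedb op (cl op A).
Proof.
apply: (big_ind (closedb op)); [exact: closedT | exact: closedI |].
by move=> C /andP[].
Qed.

Lemma subset_cl (A : {set X}) : A \subset cl op A.
Proof. by apply/bigcapsP => C /andP[]. Qed.

Lemma cl_min (A C : {set X}) : closedb op C -> A \subset C -> cl op A \subset C.
Proof. by move=> cC sAC; apply: (@bigcap_inf _ _ C); rewrite cC sAC. Qed.

Lemma cl1_sub (A : {set X}) a : a \in cl op A -> cl op [set a] \subset cl op A.
Proof. by move=> aA; apply: cl_min (cl_closed A) _; rewrite sub1set. Qed.

Lemma cl1_trans a b c :
  a \in cl op [set b] -> b \in cl op [set c] -> a \in cl op [set c].
Proof. by move=> ab /cl1_sub/subsetP; apply. Qed.

Lemma cl_sub_bigcup_cl1 (A : {set X}) :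
  cl op A \subset \bigcup_(a in A) cl op [set a].
Proof.
apply: cl_min.
  apply: (big_ind (closedb op)); [exact: closed0 | exact: closedU |].
  by move=> a _; apply: cl_closed.
apply/subsetP => a aA; apply/bigcupP; exists a => //.
by rewrite (subsetP (subset_cl _)) ?set11.
Qed.

Lemma cl_subset_closed (A : {set X}) : cl op A \subset A -> closedb op A.
Proof.
move=> clA; rewrite -(_ : cl op A = A) ?cl_closed //.
by apply/eqP; rewrite eqEsubset clA subset_cl.
Qed.

End Closure.

Section MultivectorField.
Variables (X : finType) (op : {set {set X}}) (mv : {set {set X}}).
Hypotheses (top : is_topology op) (mvf : multivector_field op mv).

Lemma mem_mvec x : x \in mvec mv x.
Proof.
by case: mvf => /and3P[/eqP cov _ _] _; rewrite /mvec mem_pblock cov inE.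
Qed.

Lemma mvec_eq (V : {set X}) x : V \in mv -> x \in V -> mvec mv x = V.
Proof. by case: mvf => /and3P[_ triv _] _; apply: def_pblock. Qed.

Lemma mvec_sym x y : y \in mvec mv x -> x \in mvec mv y.
Proof.
case: mvf => /and3P[_ triv _] _ yx.
by rewrite /mvec (same_pblock triv yx) mem_mvec.
Qed.

Lemma mv_compatible (V : {set X}) : V \in mv -> compatible mv V.
Proof. by move=> Vmv; apply/forall_inP => y yV; rewrite (mvec_eq Vmv yV). Qed.

Lemma mv_locally_closed (V : {set X}) : V \in mv -> locally_closed op V.
Proof. by case: mvf => _; apply. Qed.

Lemma mem_Pi x : x \in Pi op mv x.
Proof. by rewrite inE (subsetP (subset_cl op _)) ?set11. Qed.

Lemma cl1_Pi x y : y \in cl op [set x] -> y \in Pi op mv x.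
Proof. by rewrite inE => ->. Qed.

Lemma mvec_Pi x y : y \in mvec mv x -> y \in Pi op mv x.
Proof. by rewrite inE => ->; rewrite orbT. Qed.

Lemma lc_hull_min (A B : {set X}) :
  locally_closed op B -> compatible mv B -> A \subset B ->
  lc_hull op mv A \subset B.
Proof. by move=> lcB cB AB; apply: (@bigcap_inf _ _ B); rewrite lcB cB AB. Qed.

Lemma subset_lc_hull (A : {set X}) : A \subset lc_hull op mv A.
Proof. by apply/bigcapsP => B /and3P[]. Qed.

Lemma alpha_sub (g : Z -> X) (S : {set X}) :
  locally_closed op S -> compatible mv S -> (forall t, g t \in S) ->
  alpha op mv g \subset S.
Proof.
move=> lcS cS gS; apply: lc_hull_min => //; apply/subsetP => z.
by rewrite inE => /pbP /(_ 0%Z (Z.le_refl _)) [s [_ <-]].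
Qed.

Lemma alpha_cst x : alpha op mv (fun _ => x) = lc_hull op mv [set x].
Proof.
congr lc_hull; apply/setP => z; rewrite !inE.
apply/pbP/eqP => [/(_ 0%Z (Z.le_refl _)) [_ [_ ->]] // | <- t _].
by exists t; split; first exact: Z.le_refl.
Qed.

Lemma omega_cst x : omega op mv (fun _ => x) = lc_hull op mv [set x].
Proof.
congr lc_hull; apply/setP => z; rewrite !inE.
apply/pbP/eqP => [/(_ 0%Z (Z.le_refl _)) [_ [_ ->]] // | <- t _].
by exists t; split; first exact: Z.le_refl.
Qed.

Section IsolatedInvariant.
Variable S : {set X}.
Hypothesis Siso : isolated_invariant op mv S.

(* The path c, a, b lies in the isolating set N, as N contains Π(S). *)
Lemma isolated_invariant_path2 c a b :
  c \in S -> b \in S -> a \in Pi op mv c -> b \in Pi op mv a -> a \in S.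
Proof.
case: Siso => _ [N [_ PiSN isoN]] cS bS ac ba.
have PiN y : y \in S -> Pi op mv y \subset N.
  by move=> yS; apply: subset_trans PiSN; apply: (@bigcup_sup _ _ y).
have := isoN c [:: a; b]; rewrite /sol_path /= ac ba cS bS.
rewrite (subsetP (PiN c cS)) ?mem_Pi // (subsetP (PiN c cS)) //.
rewrite (subsetP (PiN b bS)) ?mem_Pi //.
by move=> /(_ isT isT isT isT) /and3P[].
Qed.

Lemma isolated_invariant_compatible : compatible mv S.
Proof.
apply/forall_inP => x xS; apply/subsetP => z zx.
apply: (isolated_invariant_path2 xS xS); apply: mvec_Pi => //.
exact: mvec_sym.
Qed.

(* In a finite space a point b of cl(cl S \ S) lies in cl{a} for some
   a ∈ cl S \ S, which lies in cl{c} for some c ∈ S; were b ∈ S, the path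
   c, a, b would force a ∈ S. *)
Lemma isolated_invariant_locally_closed : locally_closed op S.
Proof.
rewrite /locally_closed; set D := cl op S :\: S.
apply: (cl_subset_closed top); apply/subsetP => b.
move=> /(subsetP (cl_sub_bigcup_cl1 top D)) /bigcupP[a aD ba].
move: (aD); rewrite inE => /andP[aS /(subsetP (cl_sub_bigcup_cl1 top S))].
move=> /bigcupP[c cS ac].
have bc := cl1_trans top ba ac.
have cclS : c \in cl op S by rewrite (subsetP (subset_cl op S)).
rewrite inE (subsetP (cl1_sub top cclS) _ bc) andbT; apply/negP => bS.
by move: aS; rewrite (isolated_invariant_path2 cS bS (cl1_Pi ac) (cl1_Pi ba)).
Qed.

End IsolatedInvariant.

Lemma critical_cst_essential (V : {set X}) x :
  V \in mv -> critical op V -> x \in V -> essential op mv (fun _ => x).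
Proof.
move=> Vmv Vcrit xV.
have not_regular : ~ in_single_regular op mv (lc_hull op mv [set x]).
  move=> [W Wmv [Wreg hullW]].
  have xW : x \in W.
    by rewrite (subsetP hullW) // (subsetP (subset_lc_hull _)) ?set11.
  by apply: Wreg; rewrite -(mvec_eq Wmv xW) (mvec_eq Vmv xV).
split; first by move=> t; apply: mem_Pi.
by rewrite alpha_cst omega_cst; case.
Qed.

Section MorsePredecomposition.
Variables (P : Type) (M : P -> {set X}).
Hypothesis morse : morse_predecomposition op mv M.

Lemma alpha_essential_meets_morse (g : Z -> X) :
  essential op mv g -> exists p, alpha op mv g :&: M p != set0.
Proof.
case: morse => _ _ links ess.
have [p [_ [_ [? _]]]] := links g (conj ess (fun t => in_setT (g t))).
by exists p.
Qed.

Lemma isolated_invariant_meets_morse (S : {set X}) :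
  S != set0 -> isolated_invariant op mv S -> exists p, S :&: M p != set0.
Proof.
move=> /set0Pn[x xS] Siso; have [Sinv _] := Siso.
move: xS; rewrite -{1}Sinv inE => /andP[_ /pbP[g [[ess gS] _]]].
have [p /set0Pn[y /setIP[ya yM]]] := alpha_essential_meets_morse ess.
exists p; apply/set0Pn; exists y; rewrite inE yM andbT.
apply: (subsetP (alpha_sub _ _ gS) _ ya).
  exact: isolated_invariant_locally_closed.
exact: isolated_invariant_compatible.
Qed.

Lemma critical_sub_morse (V : {set X}) x :
  V \in mv -> critical op V -> x \in V -> exists p, x \in M p.
Proof.
move=> Vmv Vcrit xV; case: (morse) => _ Miso _.
have [p /set0Pn[y /setIP[ya yM]]] :=
  alpha_essential_meets_morse (critical_cst_essential Vmv Vcrit xV).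
have yV : y \in V.
  have alphaV := alpha_sub (mv_locally_closed Vmv) (mv_compatible Vmv).
  by apply: (subsetP (alphaV _ (fun=> xV))).
exists p; have /forall_inP/(_ y yM)/subsetP :=
  isolated_invariant_compatible (Miso p).
by apply; rewrite (mvec_eq Vmv yV).
Qed.

End MorsePredecomposition.
End MultivectorField.

Theorem proposition4p4 (X : finType) (op : {set {set X}}) (mv : {set {set X}})
  (P : Type) (M : P -> {set X}) :
  is_topology op -> T0 op ->
  multivector_field op mv ->
  invariant_set op mv [set: X] ->
  morse_predecomposition op mv M ->
  (forall S : {set X}, S != set0 -> isolated_invariant op mv S ->
     exists p, S :&: M p != set0) /\
  (forall V, V \in mv -> critical op V ->
     forall x, x \in V -> exists p, x \in M p).
Proof.
move=> top _ mvf _ morse; split.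
- by move=> S; apply: (isolated_invariant_meets_morse top mvf morse).
- by move=> V Vmv Vcrit x; apply: (critical_sub_morse mvf morse).
Qed.
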